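(* An ST graph $G$ with no twins is WDI if and only if (i) $D=\mathrm{Join}(G)$ is transitive, and (ii) for every arc $a\to b$ of $D$ there exists a vertex $c$ of $D$ such that $a\to c$ and $c\to b$ are arcs of $D$.
   Context: A digraph is a finite vertex set $V$ with arc set $E\subseteq V\times V$. $N^+(v),N^-(v)$ are out-/in-neighborhoods, $N(v)=N^+(v)\cup N^-(v)$, $d(v)=|N(v)|$. Source: $N^-(v)=\emptyset$; sink: $N^+(v)=\emptyset$; ST graph: every vertex is a source or a sink. Two distinct vertices of an ST graph are twins if $N(v)=N(w)$. A vertex $u$ is transitive if $x\to y$ is an arc for all $x\in N^-(u)$, $y\in N^+(u)$; a digraph is transitive if all its vertices are. An arc $v\to w$ is disimplicial if $x\to y$ is an arc for all $x\in N^-(w)$, $y\in N^+(v)$. A diclique is a pair $(V,W)$ of nonempty vertex sets, written $V\to W$, with $v\to w$ an arc for all $v\in V,w\in W$; an arc $v\to w$ belongs to it if $v\in V,w\in W$; it is maximal if not properly contained componentwise in another diclique; it is reduced if maximal and containing a disimplicial arc. A digraph is WDI if every arc belongs to a reduced diclique. The thin neighbor $\theta(v)$ is the unique $x\in N(v)$ with $d(x)<d(z)$ for all $z\in N(v)\setminus\{x\}$ (undefined if none); an arc $v\to w$ is thin if $\theta(v)=w$ and $\theta(w)=v$; thin arcs form a matching $M$ (no two share an endpoint); $V(M)$ is its endpoint set. $\mathrm{Join}(G)$ is the digraph with a vertex $(v,v)$ for each $v\notin V(M)$ and a vertex $(v,w)$ for each $v\to w\in M$, with $(v,w)\to(x,y)$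 an arc iff $v\to y\in E(G)$. *)

From mathcomp Require Import all_boot.
Set Implicit Arguments. Unset Strict Implicit. Unset Printing Implicit Defensive.

Section Digraphs.
Variables (T : finType) (E : rel T).

Definition outN (v : T) : {set T} := [set y | E v y].
Definition inN (v : T) : {set T} := [set x | E x v].
Definition nbhd (v : T) : {set T} := outN v :|: inN v.
Definition deg (v : T) : nat := #|nbhd v|.

Definition is_source (v : T) : bool := inN v == set0.
Definition is_sink (v : T) : bool := outN v == set0.
Definition ST_graph : Prop := forall v, is_source v || is_sink v.

Definition twins (v w : T) : bool := (v != w) && (nbhd v == nbhd w).
Definition no_twins : Prop := forall v w, ~~ twins v w.

Definition transitive_vertex (u : T) : Prop :=
  forall x y, x \in inN u -> y \in outN u -> E x y.
Definition transitive_digraph : Prop := forall u, transitive_vertex u.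

Definition disimplicial (v w : T) : Prop :=
  E v w /\ forall x y, x \in inN w -> y \in outN v -> E x y.

Definition diclique (A B : {set T}) : Prop :=
  A != set0 /\ B != set0 /\ forall a b, a \in A -> b \in B -> E a b.
Definition maximal_diclique (A B : {set T}) : Prop :=
  diclique A B /\
  ~ exists A' B', [/\ diclique A' B', A \subset A', B \subset B' & (A != A') || (B != B')].
Definition reduced_diclique (A B : {set T}) : Prop :=
  maximal_diclique A B /\ exists v w, [/\ v \in A, w \in B & disimplicial v w].
Definition WDI : Prop :=
  forall v w, E v w -> exists A B, [/\ reduced_diclique A B, v \in A & w \in B].

(* thin neighbour: thin_nb v x  <->  theta(v) is defined and equals x *)
Definition thin_nb (v x : T) : bool :=
  (x \in nbhd v) && [forall z in nbhd v, (z != x) ==> (deg x < deg z)].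
Definition thin_arc (v w : T) : bool := [&& E v w, thin_nb v w & thin_nb w v].
Definition in_VM (v : T) : bool := [exists w, thin_arc v w || thin_arc w v].

Definition join_pred (p : T * T) : bool :=
  ((p.1 == p.2) && ~~ in_VM p.1) || thin_arc p.1 p.2.
Definition join_vert := {p : T * T | join_pred p}.
Definition join_rel : rel join_vert := fun p q => E (val p).1 (val q).2.

End Digraphs.

Arguments join_pred {T} E p.
Arguments join_vert {T} E.
Arguments join_rel {T} E p q.
Arguments thin_nb {T} E v x.
Arguments thin_arc {T} E v w.
Arguments in_VM {T} E v.

(* In a twin-free ST graph a disimplicial arc v -> w is thin: any other out-neighbour
   y of v has in-neighbourhood strictly containing that of w, so a strictly larger
   degree, and symmetrically at v.  In a WDI graph the converse holds as well: a thin
   arc lies in a reduced diclique whose disimplicial arc, being of minimal degrees at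
   both ends, must be the thin arc itself.  Hence WDI amounts to "thin arcs are
   disimplicial, and every arc x -> y is covered by a thin arc v -> w with x -> w and
   v -> y", the witness diclique being (N^-(w), N^+(v)).  Transitivity of Join(G) is
   the first condition and the 2-paths of Join(G) are the second. *)
From mathcomp Require Import all_boot.
Set Implicit Arguments. Unset Strict Implicit. Unset Printing Implicit Defensive.

Section Digraphs.
Variables (T : finType) (E : rel T).

Lemma disimplicial_reduced_diclique v w :
  disimplicial E v w -> reduced_diclique E (inN E w) (outN E v).
Proof.
move=> [Evw dis_vw]; split; last by exists v, w; rewrite !inE.
have dcl : diclique E (inN E w) (outN E v).
  split; first by apply/set0Pn; exists v; rewrite inE.
  split; first by apply/set0Pn; exists w; rewrite inE.
  exact: dis_vw.
split=> // -[A [B [[_ [_ EAB] sA sB]]]].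
have -> : A = inN E w.
  apply/eqP; rewrite eq_sym eqEsubset sA; apply/subsetP=> z zA; rewrite inE.
  by apply: EAB; rewrite // (subsetP sB) ?inE.
have -> : B = outN E v.
  apply/eqP; rewrite eq_sym eqEsubset sB; apply/subsetP=> z zB; rewrite inE.
  by apply: EAB; rewrite // (subsetP sA) ?inE.
by rewrite !eqxx.
Qed.

Lemma thin_nb_min w v z :
  thin_nb E w v -> z \in nbhd E w -> deg E z <= deg E v -> z = v.
Proof.
case/andP=> _ /forall_inP min_v zw; apply: contraTeq => zv.
by rewrite -ltnNge; have /implyP := min_v z zw; apply.
Qed.

Hypothesis twin_free : no_twins E.

Lemma deg_lt_of_nbhd_subset v x :
  x != v -> nbhd E v \subset nbhd E x -> deg E v < deg E x.
Proof.
move=> xv svx; apply: proper_card; rewrite properEneq svx andbT.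
apply: contraNneq (twin_free x v) => eq_vx.
by rewrite /twins xv eq_vx eqxx.
Qed.

End Digraphs.

Section STGraphs.
Variables (T : finType) (E : rel T).
Hypothesis ST : ST_graph E.

Lemma ST_no_path2 x v y : E x v -> E v y -> False.
Proof.
move=> Exv Evy; case/orP: (ST v) => /eqP N0.
  by move/setP/(_ x): N0; rewrite !inE Exv.
by move/setP/(_ y): N0; rewrite !inE Evy.
Qed.

Lemma nbhd_outN v y : E v y -> nbhd E v = outN E v.
Proof.
move=> Evy; apply/setP=> z; rewrite !inE.
by case: (boolP (E z v)) => [Ezv | _]; [case: (ST_no_path2 Ezv Evy) | rewrite orbF].
Qed.

Lemma nbhd_inN v x : E x v -> nbhd E v = inN E v.
Proof.
move=> Exv; apply/setP=> z; rewrite !inE.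
by case: (boolP (E v z)) => // Evz; case: (ST_no_path2 Exv Evz).
Qed.

Lemma thin_join_pred v w : thin_arc E v w -> join_pred E (v, w).
Proof. by rewrite /join_pred => ->; rewrite orbT. Qed.

Lemma join_vert_thin (u : join_vert E) x y :
  E x (val u).2 -> E (val u).1 y -> thin_arc E (val u).1 (val u).2.
Proof.
case: u => -[u1 u2] /= /orP[/andP[/eqP /= <- _] Exu Euy | //].
by case: (ST_no_path2 Exu Euy).
Qed.

Lemma exists_join_fst x y : E x y -> exists a : join_vert E, (val a).1 = x.
Proof.
move=> Exy; case: (boolP (in_VM E x)) => [/existsP[w /orP[thin_xw | thin_wx]] | notM].
- by exists (exist _ (x, w) (thin_join_pred thin_xw)).
- by case/and3P: thin_wx => Ewx _ _; case: (ST_no_path2 Ewx Exy).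
have diag : join_pred E (x, x) by rewrite /join_pred /= eqxx notM.
by exists (exist _ (x, x) diag).
Qed.

Lemma exists_join_snd x y : E x y -> exists b : join_vert E, (val b).2 = y.
Proof.
move=> Exy; case: (boolP (in_VM E y)) => [/existsP[w /orP[thin_yw | thin_wy]] | notM].
- by case/and3P: thin_yw => Eyw _ _; case: (ST_no_path2 Exy Eyw).
- by exists (exist _ (w, y) (thin_join_pred thin_wy)).
have diag : join_pred E (y, y) by rewrite /join_pred /= eqxx notM.
by exists (exist _ (y, y) diag).
Qed.

Lemma join_transitiveP :
  transitive_digraph (join_rel E) <->
  (forall v w, thin_arc E v w -> disimplicial E v w).
Proof.
split=> [trans v w thin_vw | thin_dis u a b].
  split=> [|x y]; first by case/and3P: thin_vw.
  rewrite !inE => Exw Evy.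
  have [a ax] := exists_join_fst Exw; have [b by_] := exists_join_snd Evy.
  rewrite -ax -by_; apply: (trans (exist _ (v, w) (thin_join_pred thin_vw)));
    by rewrite inE /join_rel ?ax ?by_.
rewrite !inE /join_rel => Eau Eub.
by apply: (thin_dis _ _ (join_vert_thin Eau Eub)).2; rewrite inE.
Qed.

Lemma join_path2P :
  (forall a b : join_vert E, join_rel E a b ->
     exists c : join_vert E, join_rel E a c /\ join_rel E c b) <->
  (forall x y, E x y -> exists v w, [/\ thin_arc E v w, E x w & E v y]).
Proof.
split=> [path2 x y Exy | cover a b].
  have [a ax] := exists_join_fst Exy; have [b by_] := exists_join_snd Exy.
  have Eab : join_rel E a b by rewrite /join_rel ax by_.
  have [c []] := path2 a b Eab.
  rewrite /join_rel ax by_ => Exc Ecy.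
  by exists (val c).1, (val c).2; rewrite (join_vert_thin Exc Ecy).
rewrite /join_rel => Eab; have [v [w [thin_vw Eaw Evb]]] := cover _ _ Eab.
by exists (exist _ (v, w) (thin_join_pred thin_vw)).
Qed.

Hypothesis twin_free : no_twins E.

Lemma disimplicial_deg_lt_inN v w x :
  disimplicial E v w -> E x w -> x != v -> deg E v < deg E x.
Proof.
move=> [Evw dis_vw] Exw xv; apply: deg_lt_of_nbhd_subset => //.
rewrite (nbhd_outN Evw) (nbhd_outN Exw).
by apply/subsetP=> y; rewrite !inE => Evy; apply: dis_vw; rewrite inE.
Qed.

Lemma disimplicial_deg_lt_outN v w y :
  disimplicial E v w -> E v y -> y != w -> deg E w < deg E y.
Proof.
move=> [Evw dis_vw] Evy yw; apply: deg_lt_of_nbhd_subset => //.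
rewrite (nbhd_inN Evw) (nbhd_inN Evy).
by apply/subsetP=> x; rewrite !inE => Exw; apply: dis_vw; rewrite inE.
Qed.

Lemma disimplicial_thin v w : disimplicial E v w -> thin_arc E v w.
Proof.
move=> dis_vw; have Evw := dis_vw.1.
rewrite /thin_arc Evw /thin_nb !inE Evw orbT /=.
apply/andP; split; apply/forall_inP=> z.
- rewrite (nbhd_outN Evw) inE => Evz.
  exact/implyP/(disimplicial_deg_lt_outN dis_vw).
- rewrite (nbhd_inN Evw) inE => Ezw.
  exact/implyP/(disimplicial_deg_lt_inN dis_vw).
Qed.

Lemma WDI_thin_disimplicial v w : WDI E -> thin_arc E v w -> disimplicial E v w.
Proof.
move=> wdi /and3P[Evw thin_v thin_w].
have [A [B [[[[_ [_ EAB]] _] [a [b [aA bB dis_ab]]]] vA wB]]] := wdi v w Evw.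
have Eaw := EAB _ _ aA wB; have Evb := EAB _ _ vA bB.
have av : a = v.
  apply: (thin_nb_min thin_w); first by rewrite !inE Eaw orbT.
  by have [-> // | va] := eqVneq v a; rewrite ltnW ?(disimplicial_deg_lt_inN dis_ab).
have bw : b = w.
  apply: (thin_nb_min thin_v); first by rewrite !inE Evb.
  by have [-> // | wb] := eqVneq w b; rewrite ltnW ?(disimplicial_deg_lt_outN dis_ab).
by rewrite -av -bw.
Qed.

Lemma WDIP :
  WDI E <->
  (forall v w, thin_arc E v w -> disimplicial E v w) /\
  (forall x y, E x y -> exists v w, [/\ thin_arc E v w, E x w & E v y]).
Proof.
split=> [wdi | [thin_dis cover] x y Exy].
  split=> [v w | x y Exy]; first exact: WDI_thin_disimplicial.
  have [A [B [[[[_ [_ EAB]] _] [v [w [vA wB dis_vw]]]] xA yB]]] := wdi x y Exy.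
  by exists v, w; split; [exact: disimplicial_thin | exact: EAB | exact: EAB].
have [v [w [thin_vw Exw Evy]]] := cover x y Exy.
exists (inN E w), (outN E v); rewrite !inE; split=> //.
exact/disimplicial_reduced_diclique/thin_dis.
Qed.

End STGraphs.

Theorem theorem14 (T : finType) (E : rel T) :
  ST_graph E -> no_twins E ->
  (WDI E <->
   (transitive_digraph (join_rel E) /\
    (forall a b : join_vert E, join_rel E a b ->
       exists c : join_vert E, join_rel E a c /\ join_rel E c b))).
Proof.
move=> ST twin_free.
split=> [/(WDIP ST twin_free)[thin_dis cover] | [trans path2]].
  by split; [apply/(join_transitiveP ST) | apply/(join_path2P ST)].
apply/(WDIP ST twin_free).
by split; [apply/(join_transitiveP ST) | apply/(join_path2P ST)].
Qed.
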